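(* For every integer $p\ge 2$, the loop $C_p$ is isotopically transitive, i.e., its graph $M=\{(u,v,w)\in Q_{2p}^3 : w=u\ast v\}$ is acted on transitively by its autotopy group.
   Context: Let $Q_{2p}=\{x_\zeta : x\in\mathbb{Z}_p,\ \zeta\in\{0,1\}\}$. The loop $C_p$ is the operation on $Q_{2p}$ given by $x_\zeta\ast y_\xi=((-1)^\xi x+y+\zeta\xi)_{\zeta\oplus\xi}$, where the subscript arithmetic is modulo $2$ ($\oplus$) and the other arithmetic is modulo $p$. An isotopism of $Q_{2p}^3$ is a map $(u,v,w)\mapsto(\tau_1u,\tau_2v,\tau_3w)$ with $\tau_i$ permutations of $Q_{2p}$; the autotopy group of $M$ is the group of isotopisms mapping $M$ onto $M$. *)

From HB Require Import structures.
From mathcomp Require Import all_boot all_order all_algebra all_fingroup.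
Set Implicit Arguments. Unset Strict Implicit. Unset Printing Implicit Defensive.
Import GRing.Theory.
Local Open Scope ring_scope.

(* Q_{2p} = Z_p x Z_2; the pair (x, z) stands for x_z, with z : bool (true = 1). *)
Definition Q2 (p : nat) := ('Z_p * bool)%type.

Definition sgn (p : nat) (xi : bool) : 'Z_p := if xi then -1 else 1.

(* The loop C_p: x_z * y_xi = ((-1)^xi x + y + z*xi)_{z xor xi} *)
Definition Cp_op (p : nat) (a b : Q2 p) : Q2 p :=
  (sgn p b.2 * a.1 + b.1 + (a.2 && b.2)%:R, addb a.2 b.2).

Definition Cp_graph (p : nat) (t : Q2 p * Q2 p * Q2 p) : Prop :=
  t.2 = Cp_op t.1.1 t.1.2.

Definition isotopism (p : nat) (t1 t2 t3 : {perm Q2 p})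
  (t : Q2 p * Q2 p * Q2 p) : Q2 p * Q2 p * Q2 p :=
  (t1 t.1.1, t2 t.1.2, t3 t.2).

Definition is_autotopy (p : nat) (t1 t2 t3 : {perm Q2 p}) : Prop :=
  (forall t, Cp_graph t -> Cp_graph (isotopism t1 t2 t3 t)) /\
  (forall s, Cp_graph s -> exists t, Cp_graph t /\ isotopism t1 t2 t3 t = s).

From mathcomp Require Import all_boot all_order all_algebra all_fingroup.
From mathcomp Require Import ring.
Set Implicit Arguments. Unset Strict Implicit. Unset Printing Implicit Defensive.
Import GRing.Theory.
Local Open Scope ring_scope.

(* Call a triple of permutations graph-preserving when, for every triple t,
   the image of t lies in the graph M exactly when t does.  These triples
   form a group under componentwise composition, and each of them is an
   autotopy.  A triple (t1,t2,t3) with t3 (a * b) = t1 a * t2 b is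
   graph-preserving, and we write down four such triples for C_p: two
   translation families, which adjust the Z_p coordinates without touching
   the Z_2 components, and two maps that flip the Z_2 component of the
   first, respectively the second, factor.

   With these, every pair (a, b) is sent to (e, e), where e = 0_0 is the
   identity of C_p: first flip the Z_2 components to 0, then translate.
   Since w = a * b on M, every point of M is thus sent to (e, e, e).  If
   sigma sends s to (e, e, e) and tau sends t there, then sigma tau^-1 is an
   autotopy sending s to t. *)

Section Autotopies.
Variable p : nat.
Local Notation Q := (Q2 p).

Definition preserves_graph (t1 t2 t3 : {perm Q}) :=
  forall t, Cp_graph (isotopism t1 t2 t3 t) <-> Cp_graph t.

Lemma isotopismM (s1 s2 s3 t1 t2 t3 : {perm Q}) t :
  isotopism (s1 * t1)%g (s2 * t2)%g (s3 * t3)%g t =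
  isotopism t1 t2 t3 (isotopism s1 s2 s3 t).
Proof. by case: t => [[a b] w]; rewrite /isotopism /= !permM. Qed.

Lemma isotopismK (t1 t2 t3 : {perm Q}) :
  cancel (isotopism t1 t2 t3) (isotopism t1^-1%g t2^-1%g t3^-1%g).
Proof. by case=> [[a b] w]; rewrite /isotopism /= !permK. Qed.

Lemma isotopismKV (t1 t2 t3 : {perm Q}) :
  cancel (isotopism t1^-1%g t2^-1%g t3^-1%g) (isotopism t1 t2 t3).
Proof. by case=> [[a b] w]; rewrite /isotopism /= !permKV. Qed.

Lemma preserves_graph1 : preserves_graph 1%g 1%g 1%g.
Proof. by case=> [[a b] w]; rewrite /isotopism /= !perm1. Qed.

Lemma preserves_graphM (s1 s2 s3 t1 t2 t3 : {perm Q}) :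
  preserves_graph s1 s2 s3 -> preserves_graph t1 t2 t3 ->
  preserves_graph (s1 * t1)%g (s2 * t2)%g (s3 * t3)%g.
Proof. by move=> Hs Ht t; rewrite isotopismM Ht Hs. Qed.

Lemma preserves_graphV (t1 t2 t3 : {perm Q}) :
  preserves_graph t1 t2 t3 -> preserves_graph t1^-1%g t2^-1%g t3^-1%g.
Proof. by move=> H t; rewrite -[in X in _ <-> X](isotopismKV t1 t2 t3 t) H. Qed.

Lemma preserves_graph_autotopy (t1 t2 t3 : {perm Q}) :
  preserves_graph t1 t2 t3 -> is_autotopy t1 t2 t3.
Proof.
move=> H; split=> [t /H // | s Ms].
exists (isotopism t1^-1%g t2^-1%g t3^-1%g s); rewrite isotopismKV.
by split=> //; apply/H; rewrite isotopismKV.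
Qed.

Lemma autotopy_criterion (t1 t2 t3 : {perm Q}) :
  (forall a b, t3 (Cp_op a b) = Cp_op (t1 a) (t2 b)) -> preserves_graph t1 t2 t3.
Proof.
move=> H [[a b] w]; rewrite /Cp_graph /isotopism /= -H.
by split=> [/perm_inj | ->].
Qed.

Definition perm_of (f g : Q -> Q) (fK : cancel f g) : {perm Q} := perm (can_inj fK).
Lemma perm_ofE f g (fK : cancel f g) : perm_of fK =1 f.
Proof. exact: permE. Qed.

Definition translate (c : 'Z_p) (a : Q) : Q := (a.1 + c, a.2).
Lemma translateK c : cancel (translate c) (translate (- c)).
Proof. by case=> x z; rewrite /translate /= addrK. Qed.

Definition twisted_translate (c : 'Z_p) (a : Q) : Q := (a.1 + c - sgn p a.2 * c, a.2).
Lemma twisted_translateK c : cancel (twisted_translate c) (twisted_translate (- c)).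
Proof. by case=> x z; rewrite /twisted_translate /=; congr pair; ring. Qed.

Definition negate (a : Q) : Q := (- a.1, a.2).
Lemma negateK : involutive negate.
Proof. by case=> x z; rewrite /negate /= opprK. Qed.

Definition negate_flip (a : Q) : Q := (- a.1, ~~ a.2).
Lemma negate_flipK : involutive negate_flip.
Proof. by case=> x z; rewrite /negate_flip /= opprK negbK. Qed.

Definition reflect_shift (a : Q) : Q := (- a.1 - (a.2 : nat)%:R, a.2).
Lemma reflect_shiftK : involutive reflect_shift.
Proof. by case=> x z; rewrite /reflect_shift /=; congr pair; ring. Qed.

Definition flip_shift (a : Q) : Q := (a.1 + (a.2 : nat)%:R, ~~ a.2).
Definition flip_unshift (a : Q) : Q := (a.1 - (~~ a.2 : nat)%:R, ~~ a.2).
Lemma flip_shiftK : cancel flip_shift flip_unshift.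
Proof. by case=> x z; rewrite /flip_shift /flip_unshift /= negbK addrK. Qed.

Lemma translate_right_autotopy c :
  preserves_graph 1%g (perm_of (translateK c)) (perm_of (translateK c)).
Proof.
apply: autotopy_criterion => -[x z] [y w].
by rewrite perm1 !perm_ofE /translate /Cp_op /=; congr pair; ring.
Qed.

Lemma translate_left_autotopy c :
  preserves_graph (perm_of (translateK c)) (perm_of (twisted_translateK c))
    (perm_of (translateK c)).
Proof.
apply: autotopy_criterion => -[x z] [y w].
by rewrite !perm_ofE /translate /twisted_translate /Cp_op /=; congr pair; ring.
Qed.

Lemma flip_left_autotopy :
  preserves_graph (perm_of negate_flipK) (perm_of reflect_shiftK)
    (perm_of negate_flipK).
Proof.
apply: autotopy_criterion => -[x z] [y w].
rewrite !perm_ofE /negate_flip /reflect_shift /Cp_op /sgn /=.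
by case: z; case: w => /=; congr pair; ring.
Qed.

Lemma flip_right_autotopy :
  preserves_graph (perm_of negateK) (perm_of flip_shiftK) (perm_of flip_shiftK).
Proof.
apply: autotopy_criterion => -[x z] [y w].
rewrite !perm_ofE /negate /flip_shift /Cp_op /sgn /=.
by case: z; case: w => /=; congr pair; ring.
Qed.

Definition unit_elt : Q := (0, false).

Definition normalizable (a b : Q) := exists t1 t2 t3 : {perm Q},
  preserves_graph t1 t2 t3 /\ t1 a = unit_elt /\ t2 b = unit_elt.

Lemma normalizable_transport (s1 s2 s3 : {perm Q}) a b :
  preserves_graph s1 s2 s3 -> normalizable (s1 a) (s2 b) -> normalizable a b.
Proof.
move=> Hs [t1 [t2 [t3 [Ht [Ea Eb]]]]].
exists (s1 * t1)%g, (s2 * t2)%g, (s3 * t3)%g.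
by rewrite !permM; split=> //; exact: preserves_graphM.
Qed.

Lemma normalizable_even x y : normalizable (x, false) (y, false).
Proof.
apply: (normalizable_transport (translate_left_autotopy (- x))).
rewrite !perm_ofE /translate /twisted_translate /sgn /= addrN mul1r addrK.
apply: (normalizable_transport (translate_right_autotopy (- y))).
rewrite perm1 perm_ofE /translate /= addrN.
exists 1%g, 1%g, 1%g; rewrite !perm1; split=> //; exact: preserves_graph1.
Qed.

Lemma normalizable_left_even x b : normalizable (x, false) b.
Proof.
case: b => y [|]; last exact: normalizable_even.
apply: (normalizable_transport flip_right_autotopy).
by rewrite !perm_ofE /negate /flip_shift /=; exact: normalizable_even.
Qed.

Lemma normalizable_all a b : normalizable a b.
Proof.
case: a => x [|]; last exact: normalizable_left_even.
apply: (normalizable_transport flip_left_autotopy).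
by rewrite !perm_ofE /negate_flip /=; exact: normalizable_left_even.
Qed.

(* Every point of M is sent to (e, e, e), since e * e = e. *)
Lemma graph_to_unit s : Cp_graph s -> exists t1 t2 t3 : {perm Q},
  preserves_graph t1 t2 t3 /\ isotopism t1 t2 t3 s = (unit_elt, unit_elt, unit_elt).
Proof.
case: s => [[a b] w] Ms.
have [t1 [t2 [t3 [Ht [Ea Eb]]]]] := normalizable_all a b.
exists t1, t2, t3; split=> //.
have := proj2 (Ht (a, b, w)) Ms.
rewrite /Cp_graph /isotopism /= Ea Eb => ->.
by rewrite /Cp_op /unit_elt /sgn /= mul1r !addr0.
Qed.

End Autotopies.

Theorem proposition6 (p : nat) (hp : (1 < p)%N) :
  forall s t : Q2 p * Q2 p * Q2 p, Cp_graph s -> Cp_graph t ->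
  exists t1 t2 t3 : {perm Q2 p},
    is_autotopy t1 t2 t3 /\ isotopism t1 t2 t3 s = t.
Proof.
move=> s t Ms Mt.
have [s1 [s2 [s3 [Hs Es]]]] := graph_to_unit Ms.
have [t1 [t2 [t3 [Ht Et]]]] := graph_to_unit Mt.
exists (s1 * t1^-1)%g, (s2 * t2^-1)%g, (s3 * t3^-1)%g; split.
  by apply/preserves_graph_autotopy/preserves_graphM/preserves_graphV.
by rewrite isotopismM Es -Et isotopismK.
Qed.
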